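(* Let $v_1\ge v_2>0$, $m\in\mathbb{Z}_{\ge1}$, $\alpha\in(0,1)$ and $0<b\le m$. If a strategy profile $(X,Y)$ with $\mathbf{E}(X)=m+\alpha$ and $\mathbf{E}(Y)=b$ is a Nash equilibrium of the discrete all-pay auction with valuations $v_1,v_2$, then $\frac{m(m+1)}{b}=\frac{v_1}{2}$, $(X,Y)$ is a Nash equilibrium of the General Lotto game $\Gamma(m+\alpha,b)$, and $Y=\left(1-\frac bm\right)\delta_0+\frac bmU_{\mathrm{E}}^m$.
   Context: Discrete all-pay auction: two players, 1 and 2, value a prize at $v_1$ and $v_2$ respectively, where $v_1\ge v_2>0$. A (mixed) strategy is a probability distribution on $\mathbb{Z}_{\ge 0}$ with finite mean, identified with a $\mathbb{Z}_{\ge0}$-valued random variable; the two players' choices are independent. If player 1 uses $X$ and player 2 uses $Y$, the expected payoffs are $P^1(X,Y)=v_1\Pr(X>Y)+\frac{v_1}{2}\Pr(X=Y)-\mathbf{E}(X)$ and $P^2(Y,X)=v_2\Pr(Y>X)+\frac{v_2}{2}\Pr(X=Y)-\mathbf{E}(Y)$. A Nash equilibrium of the all-pay auction is a pair $(X,Y)$ with $P^1(X,Y)\ge P^1(X',Y)$ and $P^2(Y,X)\ge P^2(Y',X)$ for all strategies $X',Y'$. $\delta_j$ denotes the point mass at $j$; $\lambda A+(1-\lambda)B$ denotes the mixture of distributions $A$ and $B$. Discrete General Lotto game: for reals $a,b\ge 0$, in $\Gamma(a,b)$ player 1 chooses a distribution $X$ on $\mathbb{Z}_{\ge0}$ with $\mathbf{E}(X)=a$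 and player 2 chooses a distribution $Y$ on $\mathbb{Z}_{\ge 0}$ with $\mathbf{E}(Y)=b$ (independently); the payoff to player 1 is $H(X,Y)=\Pr(X>Y)-\Pr(X<Y)$ and to player 2 is $H(Y,X)=-H(X,Y)$. A Nash equilibrium of $\Gamma(a,b)$ is a pair $(X,Y)$ from these strategy sets such that neither player can increase her payoff by switching to another strategy in her own strategy set. For $m\ge0$, $U_{\mathrm{E}}^m$ is the uniform distribution on $\{0,2,\dots,2m\}$. *)

From Stdlib Require Import Reals Lra.
From Coquelicot Require Import Coquelicot.
Open Scope R_scope.

Definition is_strategy (p : nat -> R) : Prop :=
  (forall n, 0 <= p n) /\ is_series p 1 /\ ex_series (fun n => INR n * p n).

Definition mean (p : nat -> R) : R := Series (fun n => INR n * p n).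

Definition cdf (q : nat -> R) (k : nat) : R := sum_n q k.

(* Pr(X > Y) for independent X ~ p, Y ~ q : sum_{i>=1} p i * Pr(Y <= i-1) *)
Definition PrGt (p q : nat -> R) : R :=
  Series (fun i => match i with O => 0 | S k => p i * cdf q k end).

Definition PrEq (p q : nat -> R) : R := Series (fun i => p i * q i).

Definition P1 (v1 : R) (p q : nat -> R) : R :=
  v1 * PrGt p q + v1 / 2 * PrEq p q - mean p.
Definition P2 (v2 : R) (q p : nat -> R) : R :=
  v2 * PrGt q p + v2 / 2 * PrEq p q - mean q.

Definition allpay_NE (v1 v2 : R) (p q : nat -> R) : Prop :=
  is_strategy p /\ is_strategy q /\
  (forall p', is_strategy p' -> P1 v1 p' q <= P1 v1 p q) /\
  (forall q', is_strategy q' -> P2 v2 q' p <= P2 v2 q p).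

Definition H (p q : nat -> R) : R := PrGt p q - PrGt q p.

Definition lotto_NE (a b : R) (p q : nat -> R) : Prop :=
  (is_strategy p /\ mean p = a) /\ (is_strategy q /\ mean q = b) /\
  (forall p', is_strategy p' -> mean p' = a -> H p' q <= H p q) /\
  (forall q', is_strategy q' -> mean q' = b -> H q' p <= H q p).

Definition delta (j : nat) (n : nat) : R := if Nat.eqb n j then 1 else 0.

Definition UE (m : nat) (n : nat) : R :=
  if andb (Nat.even n) (Nat.leb n (2 * m)) then / INR (m + 1) else 0.

(* A bid distribution [p] against [q] earns the share [Pr(X > Y) + Pr(X = Y)/2] of the
   prize, which is the [p]-average of [beat q i], the share earned by the pure bid [i].
   Hence if [beat q i <= c + d i] for every [i], any strategy earns at most
   [c + d E(p)], with equality only if the bound is attained on the support of [p].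

   We test the equilibrium against two explicit strategies built as mixtures of uniform
   distributions on arithmetic progressions of step 2: player 1 deviates to [odd_bids]
   (odd bids up to 2m + 1, mean m + alpha) and player 2 to [even_bids] (the distribution
   of the theorem, mean b).  The affine bounds for the two test strategies are exactly
   complementary, which squeezes all shares: [odd_bids] is a best reply to [q] and [q]
   attains the bound of [odd_bids].  The first fact makes every odd bid up to 2m + 1 a
   best reply to [q], the second confines [q] to [0, 2m]; comparing consecutive odd bids
   then kills the odd atoms of [q] and gives mass 2 / v1 to each even atom in (0, 2m].
   Computing the total mass and the mean of [q] yields b = 2 m (m + 1) / v1 and the shape
   of [q].  The General Lotto equilibrium property holds for any all-pay equilibrium,
   since with fixed means both payoffs are increasing functions of the share. *)

From Stdlib Require Import Reals Lra Lia FunctionalExtensionality.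
From Coquelicot Require Import Coquelicot.
Open Scope R_scope.

Fixpoint below (f : nat -> R) (n : nat) : R :=
  match n with O => 0 | S n' => below f n' + f n' end.

Lemma below_S (f : nat -> R) n : below f (S n) = below f n + f n.
Proof. reflexivity. Qed.

Lemma sum_n_below (f : nat -> R) n : sum_n f n = below f (S n).
Proof.
  induction n as [|n IH]; simpl.
  - rewrite sum_O; ring.
  - rewrite sum_Sn, IH; reflexivity.
Qed.

Lemma is_series_below (f : nat -> R) (l : R) :
  is_series f l <-> is_lim_seq (below f) l.
Proof.
  rewrite (is_lim_seq_incr_1 (below f) l).
  split; intro Hl.
  - apply (is_lim_seq_ext (sum_n f)); [exact (sum_n_below f) | exact Hl].
  - apply (is_lim_seq_ext _ (sum_n f)) in Hl; [exact Hl |].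
    intro n; symmetry; apply (sum_n_below f).
Qed.

Lemma below_linear (a c : R) (f g : nat -> R) n :
  below (fun i => a * f i + c * g i) n = a * below f n + c * below g n.
Proof. induction n as [|n IH]; simpl; [ring | rewrite IH; ring]. Qed.

Lemma below_vanishing (f : nat -> R) n : (forall i, (i < n)%nat -> f i = 0) -> below f n = 0.
Proof.
  induction n as [|n IH]; intro Hf; simpl; [reflexivity|].
  rewrite IH by (intros i Hi; apply Hf; lia); rewrite Hf by lia; ring.
Qed.

Lemma below_nonneg (f : nat -> R) n : (forall i, 0 <= f i) -> 0 <= below f n.
Proof. intro Hf; induction n as [|n IH]; simpl; [lra | specialize (Hf n); lra]. Qed.

Lemma is_series_finite (f : nat -> R) N :
  (forall n, (N <= n)%nat -> f n = 0) -> is_series f (below f N).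
Proof.
  intro Hf; apply is_series_below.
  apply (is_lim_seq_ext_loc (fun _ => below f N)); [|apply is_lim_seq_const].
  exists N; intros n Hn; induction Hn as [|n Hn IH]; simpl; [reflexivity|].
  rewrite <- IH, Hf by lia; ring.
Qed.

Lemma below_le_sum (f : nat -> R) (l : R) n :
  (forall i, 0 <= f i) -> is_series f l -> below f n <= l.
Proof.
  intros Hf Hl; apply is_series_below in Hl.
  assert (Mono : forall k, below f n <= below f (n + k)).
  { induction k as [|k IH]; [rewrite Nat.add_0_r; lra|].
    rewrite Nat.add_succ_r; simpl; specialize (Hf (n + k)%nat); lra. }
  refine (is_lim_seq_le_loc (fun _ => below f n) (below f) _ _ _ (is_lim_seq_const _) Hl).
  exists n; intros k Hk; replace k with (n + (k - n))%nat by lia; apply Mono.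
Qed.

Lemma nonneg_series_zero (f : nat -> R) k :
  (forall i, 0 <= f i) -> is_series f 0 -> f k = 0.
Proof.
  intros Hf Hl; pose proof (below_le_sum f 0 (S k) Hf Hl) as Hle; simpl in Hle.
  pose proof (below_nonneg f k Hf); pose proof (Hf k); lra.
Qed.

Section Strategy.
Variable q : nat -> R.
Hypothesis Hq : is_strategy q.

Lemma strategy_nonneg i : 0 <= q i.
Proof. apply Hq. Qed.

Lemma strategy_mass : is_series q 1.
Proof. apply Hq. Qed.

Lemma strategy_ex_mean : ex_series (fun n => INR n * q n).
Proof. apply Hq. Qed.

Lemma strategy_below_bounds n : 0 <= below q n <= 1.
Proof.
  split; [exact (below_nonneg q n strategy_nonneg)|].
  exact (below_le_sum q 1 n strategy_nonneg strategy_mass).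
Qed.

Lemma strategy_atom_bounds n : 0 <= q n <= 1.
Proof.
  pose proof (strategy_below_bounds (S n)); pose proof (strategy_below_bounds n).
  rewrite below_S in *; pose proof (strategy_nonneg n); lra.
Qed.

Lemma ex_series_weighted (f : nat -> R) :
  (forall i, 0 <= f i <= 1) -> ex_series (fun i => q i * f i).
Proof.
  intro Hf; apply (@ex_series_le R_AbsRing R_CompleteNormedModule _ q);
    [| eexists; exact strategy_mass].
  intro n; specialize (Hf n); pose proof (strategy_nonneg n).
  change (Rabs (q n * f n) <= q n); rewrite Rabs_pos_eq; nra.
Qed.
End Strategy.

Definition beat (q : nat -> R) (k : nat) : R := below q k + q k / 2.

Lemma beat_succ q k : beat q (S k) = beat q k + (q k + q (S k)) / 2.
Proof. unfold beat; simpl; field. Qed.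

Lemma beat_bounds q k : is_strategy q -> 0 <= beat q k <= 1.
Proof.
  intro Hq; unfold beat; pose proof (strategy_below_bounds q Hq (S k)).
  rewrite below_S in *; pose proof (strategy_below_bounds q Hq k);
  pose proof (strategy_atom_bounds q Hq k); lra.
Qed.

Definition share (p q : nat -> R) : R := PrGt p q + PrEq p q / 2.

Lemma PrGt_below p q : PrGt p q = Series (fun i => p i * below q i).
Proof.
  apply Series_ext; intros [|i]; simpl; [ring|].
  unfold cdf; rewrite sum_n_below; reflexivity.
Qed.

Lemma share_series p q : is_strategy p -> is_strategy q ->
  share p q = Series (fun i => p i * beat q i).
Proof.
  intros Hp Hq.
  assert (Hlow : ex_series (fun i => p i * below q i))
    by exact (ex_series_weighted p Hp _ (strategy_below_bounds q Hq)).
  assert (Htie : ex_series (fun i => p i * q i))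
    by exact (ex_series_weighted p Hp _ (strategy_atom_bounds q Hq)).
  unfold share, PrEq, beat; rewrite PrGt_below.
  rewrite (Series_ext (fun i => p i * (below q i + q i / 2))
             (fun i => p i * below q i + p i * q i * / 2)) by (intro; field).
  rewrite Series_plus, Series_scal_r by (auto; apply ex_series_scal_r; exact Htie).
  field.
Qed.

(* Summation by parts for two independent bids: the partial sums of
   Pr(X > Y), Pr(Y > X) and Pr(X = Y) add up to Pr(X < n) Pr(Y < n). *)
Lemma below_product (p q : nat -> R) n :
  below (fun i => p i * below q i) n + below (fun i => q i * below p i) n
  + below (fun i => p i * q i) n = below p n * below q n.
Proof. induction n as [|n IH]; simpl; [ring | nra]. Qed.

Lemma outcomes_total p q : is_strategy p -> is_strategy q ->
  PrGt p q + PrGt q p + PrEq p q = 1.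
Proof.
  intros Hp Hq.
  assert (Hlim : forall (r s : nat -> R), is_strategy r -> is_strategy s ->
            is_lim_seq (below (fun i => r i * below s i)) (PrGt r s)).
  { intros r s Hr Hs; rewrite PrGt_below; apply is_series_below, Series_correct.
    exact (ex_series_weighted r Hr _ (strategy_below_bounds s Hs)). }
  assert (Htie : is_lim_seq (below (fun i => p i * q i)) (PrEq p q)).
  { apply is_series_below, Series_correct.
    exact (ex_series_weighted p Hp _ (strategy_atom_bounds q Hq)). }
  pose proof (is_lim_seq_plus' _ _ _ _
                (is_lim_seq_plus' _ _ _ _ (Hlim p q Hp Hq) (Hlim q p Hq Hp)) Htie) as Hsum.
  pose proof (is_lim_seq_mult' _ _ _ _ (proj1 (is_series_below p 1) (strategy_mass p Hp))
                (proj1 (is_series_below q 1) (strategy_mass q Hq))) as Hprod.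
  apply (is_lim_seq_ext _ _ _ (below_product p q)), is_lim_seq_unique in Hsum.
  apply is_lim_seq_unique in Hprod; rewrite Hprod in Hsum.
  injection Hsum; lra.
Qed.

Lemma PrEq_comm p q : PrEq p q = PrEq q p.
Proof. apply Series_ext; intro; ring. Qed.

Lemma share_complement p q : is_strategy p -> is_strategy q -> share p q + share q p = 1.
Proof.
  intros Hp Hq; unfold share; rewrite (PrEq_comm q p).
  pose proof (outcomes_total p q Hp Hq); lra.
Qed.

Lemma P1_share v p q : P1 v p q = v * share p q - mean p.
Proof. unfold P1, share; field. Qed.

Lemma P2_share v q p : P2 v q p = v * share q p - mean q.
Proof.
  unfold P2, share; rewrite (PrEq_comm p q); field.
Qed.

Lemma delta_off k n : n <> k -> delta k n = 0.
Proof. intro Hn; unfold delta; apply Nat.eqb_neq in Hn; rewrite Hn; reflexivity. Qed.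

Lemma is_series_delta k (f : nat -> R) : is_series (fun i => delta k i * f i) (f k).
Proof.
  pose proof (delta_off k) as Hd.
  replace (f k) with (below (fun i => delta k i * f i) (S k)).
  - apply is_series_finite; intros n Hn; rewrite Hd by lia; ring.
  - simpl; rewrite below_vanishing by (intros i Hi; rewrite Hd by lia; ring).
    unfold delta; rewrite Nat.eqb_refl; ring.
Qed.

Lemma delta_strategy k : is_strategy (delta k).
Proof.
  split; [|split].
  - intro n; unfold delta; destruct (Nat.eqb n k); lra.
  - refine (is_series_ext _ _ _ _ (is_series_delta k (fun _ => 1))); intro n; cbn; ring.
  - eexists; refine (is_series_ext _ _ _ _ (is_series_delta k INR)); intro n; cbn; ring.
Qed.

Lemma mean_delta k : mean (delta k) = INR k.
Proof.
  apply is_series_unique; refine (is_series_ext _ _ _ _ (is_series_delta k INR)).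
  intro n; cbn; ring.
Qed.

Lemma P1_delta v k q : is_strategy q -> P1 v (delta k) q = v * beat q k - INR k.
Proof.
  intro Hq; rewrite P1_share, share_series by (auto; apply delta_strategy).
  rewrite mean_delta, (is_series_unique _ _ (is_series_delta k (beat q))); reflexivity.
Qed.

Lemma is_series_lincomb (a c : R) (f g : nat -> R) (lf lg : R) :
  is_series f lf -> is_series g lg ->
  is_series (fun i => a * f i + c * g i) (a * lf + c * lg).
Proof.
  rewrite !is_series_below; intros Hf Hg.
  apply (is_lim_seq_ext (fun n => a * below f n + c * below g n));
    [intro n; symmetry; apply below_linear|].
  apply is_lim_seq_plus'; apply (is_lim_seq_scal_l _ _ (Finite _)); assumption.
Qed.

Lemma is_series_mean p : is_strategy p -> is_series (fun n => INR n * p n) (mean p).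
Proof. intro Hp; apply Series_correct, (strategy_ex_mean p Hp). Qed.

(* If a bid of [i] beats [q] with probability at most [c + d i], then any strategy [p]
   obtains a share at most [c + d E(p)]; the slack is the [p]-average of the pointwise
   slack, so equality forces the bound to be attained on the support of [p]. *)

Section AffineBound.
Variables (p q : nat -> R) (c d : R).
Hypotheses (Hp : is_strategy p) (Hq : is_strategy q).

Lemma share_slack :
  is_series (fun i => p i * (c + d * INR i - beat q i)) (c + d * mean p - share p q).
Proof.
  assert (Hbound : is_series (fun i => c * p i + d * (INR i * p i)) (c * 1 + d * mean p))
    by (apply is_series_lincomb; [apply strategy_mass | apply is_series_mean]; assumption).
  assert (Hshare : is_series (fun i => p i * beat q i) (share p q)).
  { rewrite share_series by assumption; apply Series_correct, (ex_series_weighted p Hp).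
    intro i; apply beat_bounds, Hq. }
  pose proof (is_series_lincomb 1 (-1) _ _ _ _ Hbound Hshare) as Hslack.
  replace (c + d * mean p - share p q) with (1 * (c * 1 + d * mean p) + -1 * share p q) by ring.
  refine (is_series_ext _ _ _ _ Hslack); intro i; cbn; ring.
Qed.

Hypothesis Hbeat : forall i, beat q i <= c + d * INR i.

Lemma slack_nonneg i : 0 <= p i * (c + d * INR i - beat q i).
Proof. apply Rmult_le_pos; [apply (strategy_nonneg p Hp) | specialize (Hbeat i); lra]. Qed.

Lemma share_le_affine : share p q <= c + d * mean p.
Proof. pose proof (below_le_sum _ _ 0 slack_nonneg share_slack) as H0; simpl in H0; lra. Qed.

Lemma share_affine_tight :
  share p q = c + d * mean p -> forall i, 0 < p i -> beat q i = c + d * INR i.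
Proof.
  intros Heq i Hpi.
  assert (Hzero : is_series (fun i => p i * (c + d * INR i - beat q i)) 0)
    by (replace 0 with (c + d * mean p - share p q) by lra; exact share_slack).
  pose proof (nonneg_series_zero _ i slack_nonneg Hzero) as Hi.
  apply Rmult_integral in Hi; lra.
Qed.
End AffineBound.

Lemma H_share p q : is_strategy p -> is_strategy q -> H p q = 2 * share p q - 1.
Proof.
  intros Hp Hq; pose proof (share_complement p q Hp Hq) as Hc.
  unfold H, share in *; rewrite (PrEq_comm q p) in *; lra.
Qed.

(* Equilibria of the all-pay auction are equilibria of the General Lotto game:
   against a fixed opponent, a deviation with the same mean bid changes the all-pay
   payoff by the valuation times the change of share. *)
Lemma allpay_NE_lotto_NE v1 v2 a b p q : 0 < v1 -> 0 < v2 ->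
  mean p = a -> mean q = b -> allpay_NE v1 v2 p q -> lotto_NE a b p q.
Proof.
  intros Hv1 Hv2 Hmp Hmq [Hp [Hq [Best1 Best2]]].
  split; [split; assumption | split; [split; assumption | split]].
  - intros p' Hp' Hm'; specialize (Best1 p' Hp'); rewrite !P1_share, Hm', Hmp in Best1.
    rewrite !H_share by assumption.
    assert (share p' q <= share p q) by (apply (Rmult_le_reg_l v1); lra); lra.
  - intros q' Hq' Hm'; specialize (Best2 q' Hq'); rewrite !P2_share, Hm', Hmq in Best2.
    rewrite !H_share by assumption.
    assert (share q' p <= share q p) by (apply (Rmult_le_reg_l v2); lra); lra.
Qed.

Definition mix (l : R) (f g : nat -> R) (n : nat) : R := (1 - l) * f n + l * g n.

Section Mixture.
Variables (l : R) (f g : nat -> R).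
Hypotheses (Hl : 0 <= l <= 1) (Hf : is_strategy f) (Hg : is_strategy g).

Lemma mix_strategy : is_strategy (mix l f g).
Proof.
  split; [|split].
  - intro n; unfold mix; pose proof (strategy_nonneg f Hf n);
      pose proof (strategy_nonneg g Hg n); nra.
  - replace 1 with ((1 - l) * 1 + l * 1) by ring.
    apply is_series_lincomb; apply strategy_mass; assumption.
  - eexists; refine (is_series_ext _ _ _ _
      (is_series_lincomb (1 - l) l _ _ _ _ (is_series_mean f Hf) (is_series_mean g Hg))).
    intro n; cbn; unfold mix; ring.
Qed.

Lemma mean_mix : mean (mix l f g) = (1 - l) * mean f + l * mean g.
Proof.
  apply is_series_unique; refine (is_series_ext _ _ _ _
      (is_series_lincomb (1 - l) l _ _ _ _ (is_series_mean f Hf) (is_series_mean g Hg))).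
  intro n; cbn; unfold mix; ring.
Qed.
End Mixture.

Lemma beat_mix l f g i : beat (mix l f g) i = (1 - l) * beat f i + l * beat g i.
Proof. unfold beat, mix; rewrite below_linear; field. Qed.

(* [unif2 s k] is uniform on the [k] points [s, s + 2, ..., s + 2(k - 1)]. *)
Definition unif2 (s k : nat) (n : nat) : R :=
  if andb (andb (Nat.leb s n) (Nat.even (n - s))) (Nat.ltb n (s + 2 * k)) then / INR k else 0.

Lemma offset_cases s n : (n < s)%nat \/ exists j, n = (s + 2 * j)%nat \/ n = (s + 2 * j + 1)%nat.
Proof.
  destruct (Nat.lt_ge_cases n s) as [Hlt|Hge]; [now left | right].
  destruct (Nat.Even_or_Odd (n - s)) as [[j Hj]|[j Hj]]; exists j; lia.
Qed.

Section Uniform.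
Variables (s k : nat).
Hypothesis Hk : (1 <= k)%nat.

Let Hk_pos : 0 < INR k.
Proof. apply lt_0_INR; lia. Qed.

Lemma unif2_on j : (j < k)%nat -> unif2 s k (s + 2 * j) = / INR k.
Proof.
  intro Hj; unfold unif2; replace (s + 2 * j - s)%nat with (2 * j)%nat by lia.
  rewrite Nat.even_mul, (proj2 (Nat.leb_le _ _)), (proj2 (Nat.ltb_lt _ _)) by lia.
  reflexivity.
Qed.

Lemma unif2_outside n : (n < s \/ s + 2 * k <= n)%nat -> unif2 s k n = 0.
Proof.
  intro Hn; unfold unif2.
  destruct (Nat.leb_spec s n), (Nat.ltb_spec n (s + 2 * k));
    rewrite ?Bool.andb_false_r; reflexivity || lia.
Qed.

Lemma unif2_gap j : unif2 s k (s + 2 * j + 1) = 0.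
Proof.
  unfold unif2; replace (s + 2 * j + 1 - s)%nat with (S (2 * j)) by lia.
  now rewrite Nat.even_succ, Nat.odd_mul, Bool.andb_false_r.
Qed.

Lemma unif2_nonneg n : 0 <= unif2 s k n.
Proof. unfold unif2; destruct (andb _ _); [apply Rlt_le, Rinv_0_lt_compat |]; lra. Qed.

Lemma below_unif2 j : (j <= k)%nat ->
  below (unif2 s k) (s + 2 * j) = INR j / INR k /\
  below (fun n => INR n * unif2 s k n) (s + 2 * j) = INR j * (INR s + INR j - 1) / INR k.
Proof.
  induction j as [|j IH]; intro Hj.
  - rewrite Nat.add_0_r; simpl.
    split; rewrite below_vanishing; try field; try lra;
      intros i Hi; rewrite unif2_outside by lia; ring.
  - replace (s + 2 * S j)%nat with (S (S (s + 2 * j))) by lia; rewrite !below_S.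
    destruct (IH ltac:(lia)) as [IHmass IHmean]; rewrite IHmass, IHmean.
    replace (S (s + 2 * j)) with (s + 2 * j + 1)%nat by lia.
    rewrite unif2_on, unif2_gap by lia.
    rewrite !S_INR, plus_INR, mult_INR; simpl; split; field; lra.
Qed.

Lemma unif2_strategy : is_strategy (unif2 s k).
Proof.
  assert (Hfin : forall n, (s + 2 * k <= n)%nat -> unif2 s k n = 0)
    by (intros n Hn; apply unif2_outside; lia).
  split; [|split].
  - exact unif2_nonneg.
  - replace 1 with (below (unif2 s k) (s + 2 * k))
      by (rewrite (proj1 (below_unif2 k (le_n k))); field; lra).
    apply is_series_finite, Hfin.
  - eexists; apply (is_series_finite _ (s + 2 * k)); intros n Hn; rewrite Hfin by lia; ring.
Qed.

Lemma mean_unif2 : mean (unif2 s k) = INR s + INR k - 1.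
Proof.
  apply is_series_unique.
  replace (INR s + INR k - 1) with (below (fun n => INR n * unif2 s k n) (s + 2 * k))
    by (rewrite (proj2 (below_unif2 k (le_n k))); field; lra).
  apply is_series_finite; intros n Hn; rewrite unif2_outside by lia; ring.
Qed.

(* Beyond the support, the bound [(i + 1 - s) / 2k] exceeds every probability. *)
Lemma beat_unif2_lt i : (s + 2 * k <= i)%nat ->
  beat (unif2 s k) i < (INR i + 1 - INR s) / (2 * INR k).
Proof.
  intro Hi; pose proof (beat_bounds _ i unif2_strategy).
  apply le_INR in Hi; rewrite plus_INR, mult_INR in Hi; simpl in Hi.
  assert (1 < (INR i + 1 - INR s) / (2 * INR k)); [|lra].
  apply Rmult_lt_reg_r with (2 * INR k); [lra|].
  unfold Rdiv; rewrite Rmult_assoc, Rinv_l; lra.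
Qed.

Lemma beat_unif2_le i : (s <= S i)%nat ->
  beat (unif2 s k) i <= (INR i + 1 - INR s) / (2 * INR k).
Proof.
  intro Hs; unfold beat.
  destruct (offset_cases s i) as [Hi|[j [->| ->]]].
  - rewrite below_vanishing by (intros n Hn; apply unif2_outside; lia).
    rewrite unif2_outside by lia; replace s with (S i) by lia.
    rewrite S_INR; apply Req_le; field; lra.
  - destruct (Nat.lt_ge_cases j k) as [Hj|Hj];
      [| apply Rlt_le, beat_unif2_lt; lia].
    rewrite (proj1 (below_unif2 j ltac:(lia))), unif2_on by lia.
    rewrite plus_INR, mult_INR; apply Req_le; simpl; field; lra.
  - destruct (Nat.lt_ge_cases j k) as [Hj|Hj];
      [| apply Rlt_le, beat_unif2_lt; lia].
    rewrite Nat.add_1_r, below_S, (proj1 (below_unif2 j ltac:(lia))), unif2_on by lia.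
    rewrite <- Nat.add_1_r, unif2_gap, !plus_INR, mult_INR.
    apply Req_le; simpl; field; lra.
Qed.
End Uniform.

Lemma UE_unif2 m : UE m = unif2 0 (S m).
Proof.
  apply functional_extensionality; intro n; unfold UE, unif2.
  rewrite Nat.add_1_r, Nat.sub_0_r, Nat.add_0_l, Bool.andb_true_l.
  destruct (Nat.even n) eqn:Hev; [|reflexivity].
  apply Nat.even_spec in Hev; destruct Hev as [j ->]; rewrite !Bool.andb_true_l.
  destruct (Nat.leb_spec (2 * j) (2 * m)), (Nat.ltb_spec (2 * j) (2 * S m));
    reflexivity || lia.
Qed.

(* The two test strategies.  [odd_bids m al] mixes the uniform distributions on the odd
   numbers [< 2m] and [<= 2m + 1]; it has mean [m + al], and a bid of [i] beats it with
   probability at most [i odd_rate / 2], strictly so beyond [2m].  [even_bids m b] is the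
   strategy of the theorem; it has mean [b], and bids beat it at most at an affine rate. *)

Definition odd_rate (m : nat) (al : R) : R := (1 - al) / INR m + al / (INR m + 1).
Definition odd_bids (m : nat) (al : R) : nat -> R := mix al (unif2 1 m) (unif2 1 (S m)).
Definition even_bids (m : nat) (b : R) : nat -> R := mix (b / INR m) (delta 0) (UE m).

Section OddBids.
Variables (m : nat) (al : R).
Hypotheses (Hm : (1 <= m)%nat) (Hal : 0 < al < 1).

Let Hm_pos : 1 <= INR m.
Proof. apply (le_INR 1); lia. Qed.

Lemma odd_bids_strategy : is_strategy (odd_bids m al).
Proof. apply mix_strategy; [lra | apply unif2_strategy | apply unif2_strategy]; lia. Qed.

Lemma mean_odd_bids : mean (odd_bids m al) = INR m + al.
Proof.
  unfold odd_bids; rewrite mean_mix, !mean_unif2 by first [lra | lia | apply unif2_strategy; lia].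
  rewrite (S_INR m); simpl INR; ring.
Qed.

Let odd_rate_split i : INR i * odd_rate m al / 2 =
  (1 - al) * ((INR i + 1 - 1) / (2 * INR m)) + al * ((INR i + 1 - 1) / (2 * (INR m + 1))).
Proof. unfold odd_rate; field; lra. Qed.

Lemma beat_odd_bids i : beat (odd_bids m al) i <= INR i * odd_rate m al / 2.
Proof.
  unfold odd_bids; rewrite beat_mix.
  pose proof (beat_unif2_le 1 m Hm i ltac:(lia)) as Hlow.
  pose proof (beat_unif2_le 1 (S m) ltac:(lia) i ltac:(lia)) as Hhigh.
  rewrite (S_INR m) in Hhigh; simpl INR in *.
  rewrite odd_rate_split.
  apply Rplus_le_compat; apply Rmult_le_compat_l; lra.
Qed.

Lemma beat_odd_bids_lt i : (2 * m < i)%nat -> beat (odd_bids m al) i < INR i * odd_rate m al / 2.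
Proof.
  intro Hi; unfold odd_bids; rewrite beat_mix.
  pose proof (beat_unif2_lt 1 m Hm i ltac:(lia)) as Hlow.
  pose proof (beat_unif2_le 1 (S m) ltac:(lia) i ltac:(lia)) as Hhigh.
  rewrite (S_INR m) in Hhigh; simpl INR in *.
  rewrite odd_rate_split.
  apply Rplus_lt_le_compat; [apply Rmult_lt_compat_l | apply Rmult_le_compat_l]; lra.
Qed.

Lemma odd_bids_pos j : (j <= m)%nat -> 0 < odd_bids m al (2 * j + 1).
Proof.
  intro Hj; unfold odd_bids, mix.
  replace (2 * j + 1)%nat with (1 + 2 * j)%nat by lia.
  rewrite (unif2_on 1 (S m)) by lia.
  pose proof (unif2_nonneg 1 m Hm (1 + 2 * j)).
  assert (0 < / INR (S m)) by (apply Rinv_0_lt_compat, lt_0_INR; lia).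
  nra.
Qed.

End OddBids.

Section EvenBids.
Variables (m : nat) (b : R).
Hypotheses (Hm : (1 <= m)%nat) (Hb : 0 < b <= INR m).

Let Hm_pos : 1 <= INR m.
Proof. apply (le_INR 1); lia. Qed.

Let weight_bounds : 0 <= b / INR m <= 1.
Proof.
  split; [apply Rdiv_le_0_compat; lra|].
  apply Rmult_le_reg_r with (INR m); [lra|].
  unfold Rdiv; rewrite Rmult_assoc, Rinv_l; lra.
Qed.

Lemma even_bids_strategy : is_strategy (even_bids m b).
Proof.
  apply mix_strategy; [exact weight_bounds | apply delta_strategy |].
  rewrite UE_unif2; apply unif2_strategy; lia.
Qed.

Lemma mean_even_bids : mean (even_bids m b) = b.
Proof.
  unfold even_bids; rewrite UE_unif2, mean_mix, mean_unif2
    by first [lia | exact weight_bounds | apply delta_strategy | apply unif2_strategy; lia].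
  rewrite mean_delta.
  rewrite (S_INR m); simpl INR; field; lra.
Qed.

Lemma beat_even_bids i :
  beat (even_bids m b) i <= (1 - b / INR m + b / INR m / (2 * (INR m + 1)))
                            + b / INR m / (2 * (INR m + 1)) * INR i.
Proof.
  unfold even_bids; rewrite beat_mix, UE_unif2.
  pose proof (beat_bounds (delta 0) i (delta_strategy 0)).
  pose proof (beat_unif2_le 0 (S m) ltac:(lia) i ltac:(lia)) as Hunif.
  rewrite (S_INR m) in Hunif; simpl INR in Hunif.
  replace (1 - b / INR m + b / INR m / (2 * (INR m + 1)) + b / INR m / (2 * (INR m + 1)) * INR i)
    with ((1 - b / INR m) * 1 + b / INR m * ((INR i + 1 - 0) / (2 * (INR m + 1))))
    by (field; lra).
  pose proof weight_bounds; apply Rplus_le_compat; apply Rmult_le_compat_l; lra.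
Qed.

End EvenBids.

(* The affine bound for [even_bids] at the mean [m + al] is exactly the complement of
   the bound for [odd_bids] at the mean [b]: the two test strategies are in balance. *)
Lemma test_bounds_balance m al b : (1 <= m)%nat ->
  (1 - b / INR m + b / INR m / (2 * (INR m + 1)))
  + b / INR m / (2 * (INR m + 1)) * (INR m + al) = 1 - b * odd_rate m al / 2.
Proof. intro Hm; apply (le_INR 1) in Hm; simpl in Hm; unfold odd_rate; field; lra. Qed.

Section Equilibrium.
Variables (v1 v2 : R) (m : nat) (al b : R) (p q : nat -> R).
Hypotheses (Hv : v2 <= v1) (Hv2 : 0 < v2) (Hm : (1 <= m)%nat) (Hal : 0 < al < 1)
  (Hb : 0 < b <= INR m) (Hmp : mean p = INR m + al) (Hmq : mean q = b)
  (NE : allpay_NE v1 v2 p q).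

Let Hp : is_strategy p. Proof. apply NE. Qed.
Let Hq : is_strategy q. Proof. apply NE. Qed.
Let Hv1 : 0 < v1. Proof. lra. Qed.
Let HX : is_strategy (odd_bids m al). Proof. exact (odd_bids_strategy m al Hm Hal). Qed.

Lemma beat_q_le i : beat q i <= P1 v1 p q / v1 + / v1 * INR i.
Proof.
  pose proof (proj1 (proj2 (proj2 NE)) (delta i) (delta_strategy i)) as Hdev.
  rewrite P1_delta in Hdev by exact Hq.
  apply (Rmult_le_reg_l v1); [lra|]; field_simplify; lra.
Qed.

(* Testing [p] against [even_bids] and [q] against [odd_bids] squeezes the shares:
   [odd_bids] is a best reply to [q], and it loses to [q] at the extremal rate. *)
Lemma odd_bids_best_reply : P1 v1 (odd_bids m al) q = P1 v1 p q /\
  share q (odd_bids m al) = 0 + odd_rate m al / 2 * mean q.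
Proof.
  pose proof (proj1 (proj2 (proj2 NE)) _ HX) as Best1.
  pose proof (proj2 (proj2 (proj2 NE)) _ (even_bids_strategy m b Hm Hb)) as Best2.
  rewrite !P1_share, mean_odd_bids, Hmp in Best1 by assumption.
  rewrite !P2_share, mean_even_bids, Hmq in Best2 by assumption.
  assert (Hq_vs_X : share q (odd_bids m al) <= 0 + odd_rate m al / 2 * mean q)
    by (apply share_le_affine; auto; intro i; pose proof (beat_odd_bids m al Hm Hal i); lra).
  assert (Hp_vs_Y : share p (even_bids m b) <= 1 - b * odd_rate m al / 2).
  { rewrite <- (test_bounds_balance m al b Hm), <- Hmp.
    apply share_le_affine; auto; [apply even_bids_strategy; auto|].
    intro i; apply beat_even_bids; auto. }
  pose proof (share_complement _ q HX Hq).
  pose proof (share_complement p q Hp Hq).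
  pose proof (share_complement p (even_bids m b) Hp (even_bids_strategy m b Hm Hb)).
  assert (share (even_bids m b) p <= share q p) by (apply (Rmult_le_reg_l v2); lra).
  assert (share (odd_bids m al) q <= share p q) by (apply (Rmult_le_reg_l v1); lra).
  rewrite Hmq in *.
  assert (Hsame : share (odd_bids m al) q = share p q) by lra.
  split; [rewrite !P1_share, mean_odd_bids, Hmp, Hsame by assumption |]; lra.
Qed.

(* [q] never bids above [2m]: such bids lie where the bound for [odd_bids] is strict. *)
Lemma q_vanishes_beyond n : (2 * m < n)%nat -> q n = 0.
Proof.
  intro Hn; destruct (strategy_nonneg q Hq n) as [Hpos|Hzero]; [|auto].
  pose proof (share_affine_tight q (odd_bids m al) 0 (odd_rate m al / 2) Hq HX
                (fun i => ltac:(pose proof (beat_odd_bids m al Hm Hal i); lra))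
                (proj2 odd_bids_best_reply) n Hpos).
  pose proof (beat_odd_bids_lt m al Hm Hal n Hn); lra.
Qed.

Lemma beat_q_odd j : (j <= m)%nat ->
  beat q (2 * j + 1) = P1 v1 p q / v1 + / v1 * INR (2 * j + 1).
Proof.
  intro Hj; apply (share_affine_tight (odd_bids m al) q); auto.
  - exact beat_q_le.
  - pose proof (proj1 odd_bids_best_reply) as Hpay; rewrite P1_share in Hpay.
    apply (Rmult_eq_reg_l v1); [|lra]; field_simplify; lra.
  - apply odd_bids_pos; assumption.
Qed.

(* Comparing the odd bids [2j + 1], [2j + 3] with the even bid [2j + 2] in between. *)
Lemma q_odd_step j : (j < m)%nat ->
  q (2 * j + 1) <= q (2 * j + 3) /\ q (2 * j + 1) + 2 * q (2 * j + 2) + q (2 * j + 3) = 4 / v1.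
Proof.
  intro Hj.
  pose proof (beat_q_odd j ltac:(lia)) as Hodd; pose proof (beat_q_odd (S j) ltac:(lia)) as Hnext.
  pose proof (beat_q_le (2 * j + 2)) as Heven.
  replace (2 * S j + 1)%nat with (S (S (2 * j + 1))) in Hnext by lia.
  replace (2 * j + 2)%nat with (S (2 * j + 1)) in * by lia.
  replace (2 * j + 3)%nat with (S (S (2 * j + 1))) by lia.
  rewrite !beat_succ in Hnext; rewrite beat_succ in Heven.
  rewrite Hodd, !S_INR in *; unfold Rdiv; split; lra.
Qed.

(* Backward induction from [q (2m + 1) = 0]: [q] never bids an odd number. *)
Lemma q_odd_zero j : (j <= m)%nat -> q (2 * j + 1) = 0.
Proof.
  intro Hj; replace j with (m - (m - j))%nat by lia.
  assert (Ht : (m - j <= m)%nat) by lia; revert Ht.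
  induction (m - j)%nat as [|t IH]; intro Ht.
  - apply q_vanishes_beyond; lia.
  - pose proof (proj1 (q_odd_step (m - S t) ltac:(lia))) as Hle.
    replace (2 * (m - S t) + 3)%nat with (2 * (m - t) + 1)%nat in Hle by lia.
    rewrite IH in Hle by lia.
    pose proof (strategy_nonneg q Hq (2 * (m - S t) + 1)); lra.
Qed.

Lemma q_even j : (j < m)%nat -> q (2 * j + 2) = 2 / v1.
Proof.
  intro Hj; pose proof (proj2 (q_odd_step j Hj)) as Hsum.
  rewrite q_odd_zero in Hsum by lia.
  replace (2 * j + 3)%nat with (2 * S j + 1)%nat in Hsum by lia.
  rewrite q_odd_zero in Hsum by lia; lra.
Qed.

Lemma below_q j : (j <= m)%nat ->
  below q (2 * j + 1) = q 0%nat + INR j * (2 / v1) /\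
  below (fun n => INR n * q n) (2 * j + 1) = INR j * (INR j + 1) * (2 / v1).
Proof.
  induction j as [|j IH]; intro Hj; [simpl; split; ring|].
  destruct (IH ltac:(lia)) as [IHmass IHmean].
  replace (2 * S j + 1)%nat with (S (S (2 * j + 1))) by lia; rewrite !below_S, IHmass, IHmean.
  replace (S (2 * j + 1)) with (2 * j + 2)%nat by lia.
  rewrite q_odd_zero, q_even by lia.
  rewrite S_INR, !plus_INR, mult_INR; simpl INR; split; field; lra.
Qed.

Lemma q_values : q 0%nat = 1 - INR m * (2 / v1) /\ b = INR m * (INR m + 1) * (2 / v1).
Proof.
  assert (Hfin : forall n, (2 * m + 1 <= n)%nat -> q n = 0)
    by (intros; apply q_vanishes_beyond; lia).
  destruct (below_q m (le_n m)) as [Hmass Hmean].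
  split.
  - pose proof (is_series_unique _ _ (strategy_mass q Hq)) as Hone.
    rewrite (is_series_unique _ _ (is_series_finite q _ Hfin)), Hmass in Hone; lra.
  - rewrite <- Hmq, <- Hmean; apply is_series_unique, is_series_finite.
    intros n Hn; rewrite Hfin by lia; ring.
Qed.

Lemma q_is_even_bids n : q n = even_bids m b n.
Proof.
  destruct q_values as [Hq0 Hbv].
  assert (Hm_pos : 1 <= INR m) by (apply (le_INR 1); lia).
  unfold even_bids, mix; rewrite UE_unif2.
  destruct (offset_cases 0 n) as [Hn|[j [-> | ->]]]; [lia| |].
  - destruct (Nat.le_gt_cases j m) as [Hj|Hj].
    + rewrite unif2_on by lia; destruct j as [|j].
      * unfold delta; rewrite S_INR; simpl (Nat.eqb _ _); simpl Nat.add.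
        rewrite Hq0, Hbv; field; lra.
      * rewrite delta_off by lia; replace (0 + 2 * S j)%nat with (2 * j + 2)%nat by lia.
        rewrite q_even, Hbv, S_INR by lia; field; lra.
    + rewrite delta_off, unif2_outside, q_vanishes_beyond by lia; ring.
  - rewrite delta_off, unif2_gap by lia; rewrite Nat.add_0_l.
    destruct (Nat.le_gt_cases j m) as [Hj|Hj];
      [rewrite q_odd_zero | rewrite q_vanishes_beyond]; lia || ring.
Qed.
End Equilibrium.

Theorem lemma4 (v1 v2 : R) (m : nat) (alpha b : R) (p q : nat -> R) :
  v2 <= v1 -> 0 < v2 -> (1 <= m)%nat -> 0 < alpha < 1 -> 0 < b <= INR m ->
  mean p = INR m + alpha -> mean q = b ->
  allpay_NE v1 v2 p q ->
  INR m * (INR m + 1) / b = v1 / 2 /\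
  lotto_NE (INR m + alpha) b p q /\
  (forall n, q n = (1 - b / INR m) * delta 0 n + (b / INR m) * UE m n).
Proof.
  intros Hv Hv2 Hm Hal Hb Hmp Hmq NE.
  destruct (q_values v1 v2 m alpha b p q Hv Hv2 Hm Hal Hb Hmp Hmq NE) as [_ Hbv].
  assert (Hm_pos : 1 <= INR m) by (apply (le_INR 1); lia).
  split; [|split].
  - rewrite Hbv; field; lra.
  - apply (allpay_NE_lotto_NE v1 v2); auto; lra.
  - exact (q_is_even_bids v1 v2 m alpha b p q Hv Hv2 Hm Hal Hb Hmp Hmq NE).
Qed.
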